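(* There is a constant $c$ depending only on the constants of Assumption (A) such that the following holds. Let $L\in\mathbb{N}$, $\tau=T/L$, $k\in\{0,\dots,L-1\}$, and let $\phi:\mathbb{R}^d\to\mathbb{R}$ be Lipschitz continuous with constant $M$. Then for all $x,x'\in\mathbb{R}^d$ and $p\in\Delta(I)$, $$\Big|\mathbb{E}[\phi(\bar X^{k,x}_{k+1})]+\tau H\Big(t_k,x,\tfrac1\tau\mathbb{E}\big[\phi(\bar X^{k,x}_{k+1})(\sigma^* )^{-1}(t_k,x)\Delta B^k\big],p\Big)-\mathbb{E}[\phi(\bar X^{k,x'}_{k+1})]-\tau H\Big(t_k,x',\tfrac1\tau\mathbb{E}\big[\phi(\bar X^{k,x'}_{k+1})(\sigma^* )^{-1}(t_k,x')\Delta B^k\big],p\Big)\Big|\le \big(M(1+c\tau)+c\tau\big)|x-x'|.$$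
   Context: Standing setup. Fix $T>0$, integers $d,I\ge1$, compact subsets $U,V$ of finite-dimensional spaces, and $\Delta(I)=\{p\in\mathbb{R}^I:p_i\ge0,\ \sum_ip_i=1\}$. Let $b:[0,T]\times\mathbb{R}^d\times U\times V\to\mathbb{R}^d$, $\sigma:[0,T]\times\mathbb{R}^d\to\mathbb{R}^{d\times d}$, $l_i:[0,T]\times\mathbb{R}^d\times U\times V\to\mathbb{R}$ and $g_i:\mathbb{R}^d\to\mathbb{R}$ ($i=1,\dots,I$) satisfy Assumption (A): (i) $b$ is bounded, continuous, and Lipschitz in $(t,x)$ uniformly in $(u,v)$; (ii) $\sigma$ is bounded and Lipschitz in $(t,x)$, the transpose $\sigma^*(t,x)$ is invertible for every $(t,x)$, and $(\sigma^* )^{-1}$ is bounded and Lipschitz in $(t,x)$; (iii) each $l_i$ is bounded, continuous and Lipschitz in $(t,x)$ uniformly in $(u,v)$, and each $g_i$ is bounded and Lipschitz; (iv) (Isaacs condition) for all $(t,x,\xi,p)\in[0,T]\times\mathbb{R}^d\times\mathbb{R}^d\times\Delta(I)$, $\inf_{u\in U}\sup_{v\in V}\{\langle b(t,x,u,v),\xi\rangle+\sum_ip_il_i(t,x,u,v)\}=\sup_{v\in V}\inf_{u\in U}\{\cdots\}=:H(t,x,\xi,p)$. ''Constants of Assumption (A)'' means the bounds and Lipschitz constants in (i)–(iii) together with $T,d,I$. (Under (A) there is $c$ with $|H(t,x,\xi,p)|\le c(1+|\xi|)$ and $|H(t,x,\xi,p)-H(t',x',\xi',p')|\le c(1+|\xi|)(|x-x'|+|t-t'|)+c|\xi-\xi'|+c|p-p'|$.)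 Discretization. Let $B$ be a $d$-dimensional standard Brownian motion. For $L\in\mathbb{N}$ set $\tau=T/L$, $t_k=k\tau$ ($k=0,\dots,L$), $\Delta B^k=B_{t_{k+1}}-B_{t_k}$. For $k\in\{0,\dots,L\}$ and $x\in\mathbb{R}^d$ the Euler scheme is $\bar X^{k,x}_n=x+\sum_{j=k}^{n-1}\sigma(t_j,\bar X^{k,x}_j)\Delta B^j$, $n=k,\dots,L$; in particular $\bar X^{k,x}_{k+1}=x+\sigma(t_k,x)\Delta B^k$. *)

From Stdlib Require Import Reals Lra Lia Classical ClassicalEpsilon.
Open Scope R_scope.

(* Vectors of R^n are functions nat -> R; only coordinates 0..n-1 matter. *)
Definition vec := nat -> R.
Definition mat := nat -> nat -> R.

Fixpoint sumn (n : nat) (f : nat -> R) : R :=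
  match n with O => 0 | S m => sumn m f + f m end.

Definition dot (n : nat) (x y : vec) : R := sumn n (fun i => x i * y i).
Definition norm (n : nat) (x : vec) : R := sqrt (dot n x x).
Definition vdist (n : nat) (x y : vec) : R := norm n (fun i => x i - y i).
Definition vadd (x y : vec) : vec := fun i => x i + y i.
Definition matvec (n : nat) (A : mat) (z : vec) : vec :=
  fun i => sumn n (fun j => A i j * z j).
Definition mnorm (n : nat) (A : mat) : R :=
  sqrt (sumn n (fun i => sumn n (fun j => A i j ^ 2))).
Definition kron (i j : nat) : R := if Nat.eqb i j then 1 else 0.

Definition bounded_set (m : nat) (S : vec -> Prop) : Prop :=
  exists C, forall u, S u -> norm m u <= C.
Definition closed_set (m : nat) (S : vec -> Prop) : Prop :=
  forall (s : nat -> vec) (u : vec),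
    (forall k, S (s k)) ->
    (forall eps, 0 < eps -> exists N, forall k, (N <= k)%nat -> vdist m (s k) u < eps) ->
    S u.
Definition compact_set (m : nat) (S : vec -> Prop) : Prop :=
  closed_set m S /\ bounded_set m S.

Definition simplex (I : nat) (p : vec) : Prop :=
  (forall i, (i < I)%nat -> 0 <= p i) /\ sumn I p = 1.

(* Supremum / infimum of a set of reals (classical choice; meaningful when the
   set is nonempty and bounded, which is the case under Assumption (A)). *)
Definition sup_R (P : R -> Prop) : R := epsilon (inhabits 0) (fun s => is_lub P s).
Definition inf_R (P : R -> Prop) : R := - sup_R (fun y => P (- y)).

Definition Hinfsup (d I : nat) (U V : vec -> Prop)
  (b : R -> vec -> vec -> vec -> vec) (l : nat -> R -> vec -> vec -> vec -> R)
  (t : R) (x xi p : vec) : R :=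
  inf_R (fun w => exists u, U u /\
     w = sup_R (fun z => exists v, V v /\
            z = dot d (b t x u v) xi + sumn I (fun i => p i * l i t x u v))).
Definition Hsupinf (d I : nat) (U V : vec -> Prop)
  (b : R -> vec -> vec -> vec -> vec) (l : nat -> R -> vec -> vec -> vec -> R)
  (t : R) (x xi p : vec) : R :=
  sup_R (fun w => exists v, V v /\
     w = inf_R (fun z => exists u, U u /\
            z = dot d (b t x u v) xi + sumn I (fun i => p i * l i t x u v))).

Definition inT (T t : R) : Prop := 0 <= t <= T.

Definition assumptionA (T : R) (d I mU mV : nat) (U V : vec -> Prop)
  (b : R -> vec -> vec -> vec -> vec) (sigma : R -> vec -> mat) (sinv : R -> vec -> mat)
  (l : nat -> R -> vec -> vec -> vec -> R) (g : nat -> vec -> R)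
  (Cb Lb Cs Ls Ci Li Cl Ll Cg Lg : R) : Prop :=
  compact_set mU U /\ compact_set mV V /\ (exists u, U u) /\ (exists v, V v) /\
  (forall t x u v, inT T t -> U u -> V v -> norm d (b t x u v) <= Cb) /\
  (forall t x u v, inT T t -> U u -> V v -> forall eps, 0 < eps -> exists delta, 0 < delta /\
     forall t' x' u' v', inT T t' -> U u' -> V v' -> Rabs (t - t') < delta ->
       vdist d x x' < delta -> vdist mU u u' < delta -> vdist mV v v' < delta ->
       vdist d (b t x u v) (b t' x' u' v') < eps) /\
  (forall t t' x x' u v, inT T t -> inT T t' -> U u -> V v ->
     vdist d (b t x u v) (b t' x' u v) <= Lb * (Rabs (t - t') + vdist d x x')) /\
  (* (ii) sigma bounded Lipschitz, sigma^* invertible with inverse sinv bounded Lipschitz *)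
  (forall t x, inT T t -> mnorm d (sigma t x) <= Cs) /\
  (forall t t' x x', inT T t -> inT T t' ->
     mnorm d (fun i j => sigma t x i j - sigma t' x' i j) <= Ls * (Rabs (t - t') + vdist d x x')) /\
  (forall t x, inT T t -> forall i j, (i < d)%nat -> (j < d)%nat ->
     sumn d (fun k => sigma t x k i * sinv t x k j) = kron i j /\
     sumn d (fun k => sinv t x i k * sigma t x j k) = kron i j) /\
  (forall t x, inT T t -> mnorm d (sinv t x) <= Ci) /\
  (forall t t' x x', inT T t -> inT T t' ->
     mnorm d (fun i j => sinv t x i j - sinv t' x' i j) <= Li * (Rabs (t - t') + vdist d x x')) /\
  (forall i t x u v, (i < I)%nat -> inT T t -> U u -> V v -> Rabs (l i t x u v) <= Cl) /\
  (forall i t x u v, (i < I)%nat -> inT T t -> U u -> V v -> forall eps, 0 < eps ->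
     exists delta, 0 < delta /\
     forall t' x' u' v', inT T t' -> U u' -> V v' -> Rabs (t - t') < delta ->
       vdist d x x' < delta -> vdist mU u u' < delta -> vdist mV v v' < delta ->
       Rabs (l i t x u v - l i t' x' u' v') < eps) /\
  (forall i t t' x x' u v, (i < I)%nat -> inT T t -> inT T t' -> U u -> V v ->
     Rabs (l i t x u v - l i t' x' u v) <= Ll * (Rabs (t - t') + vdist d x x')) /\
  (forall i x, (i < I)%nat -> Rabs (g i x) <= Cg) /\
  (forall i x x', (i < I)%nat -> Rabs (g i x - g i x') <= Lg * vdist d x x') /\
  (forall t x xi p, inT T t -> simplex I p ->
     Hinfsup d I U V b l t x xi p = Hsupinf d I U V b l t x xi p).

Definition gdens (tau z : R) : R := exp (- (z ^ 2) / (2 * tau)) / sqrt (2 * PI * tau).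

Definition gauss1 (tau : R) (g : R -> R) (lv : R) : Prop :=
  exists pr : (forall a c, Riemann_integrable (fun z => g z * gdens tau z) a c),
  forall eps, 0 < eps -> exists A, forall a c, a <= - A -> A <= c ->
    Rabs (RiemannInt (pr a c) - lv) < eps.

Definition vupd (z : vec) (m : nat) (s : R) : vec :=
  fun i => if Nat.eqb i m then s else z i.

(* gauss_int n tau F lv : E[F(Z)] = lv where Z = (Z_0,..,Z_{n-1},0,0,..) with
   Z_0,..,Z_{n-1} i.i.d. N(0,tau), computed as an iterated improper integral. *)
Fixpoint gauss_int (n : nat) (tau : R) (F : vec -> R) (lv : R) : Prop :=
  match n with
  | O => lv = F (fun _ => 0)
  | S m => exists G : vec -> R,
      (forall z, gauss1 tau (fun s => F (vupd z m s)) (G z)) /\ gauss_int m tau G lv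
  end.

(* Write Z = ΔB^k ~ N(0, τ I) and freeze a control (u, v).  By linearity, with β = σ^{-1} b,
   E[φ(x + σ Z)] + τ ⟨b, E[φ(x + σ Z) σ^{-T} Z] / τ⟩ = E[φ(x + σ Z)(1 + β·Z)].
   Coupling the steps from x and x' through the same Z, the difference of these expectations is
   E[(φ(X) - φ(X'))(1 + β·Z) + (φ(X') - φ(x'))(β - β')·Z], the extra term having mean zero.  Young's
   inequality with weight |x - x'| and the second moments E|A Z|² = τ |A|² bound it by
   M (1 + c τ) |x - x'|; the running cost adds τ L_l |x - x'|, and an inf-sup of payoffs moves by at
   most the uniform distance between them.  Only the moments of N(0, τ) up to order two are needed;
   they rest on the Gaussian integral, computed with Feynman's trick.  Nothing uses that σ^{-T} is
   actually the inverse of σ^T, only that it is bounded and Lipschitz. *)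

From Coquelicot Require Import Coquelicot.
From Stdlib Require Import Reals Lra Lia Psatz FunctionalExtensionality ClassicalEpsilon.
Open Scope R_scope.

Lemma continuous_of_ex_derive (f : R -> R) x : ex_derive f x -> continuous f x.
Proof. apply (ex_derive_continuous (K := R_AbsRing) (V := R_NormedModule)). Qed.

Lemma ex_RInt_of_continuous (f : R -> R) a b :
  (forall z, Rmin a b <= z <= Rmax a b -> continuous f z) -> ex_RInt f a b.
Proof. apply (ex_RInt_continuous (V := R_CompleteNormedModule)). Qed.

Lemma exp_le_exp (a b : R) : a <= b -> exp a <= exp b.
Proof. intros [H| ->]; [apply Rlt_le, exp_increasing, H | apply Rle_refl]. Qed.

Lemma exp_neg_le_inv (y : R) : 0 <= y -> exp (- y) <= 1 / (1 + y).
Proof.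
  intros Hy. pose proof (exp_ineq1_le y).
  rewrite exp_Ropp. unfold Rdiv. rewrite Rmult_1_l. apply Rinv_le_contravar; lra.
Qed.

(** * The Gaussian integral *)

(* Feynman's trick: d/dx [(∫_0^x e^(-t²) dt)² + ∫_0^1 e^(-x²(1+t²))/(1+t²) dt] = 0,
   and the bracket equals atan 1 = π/4 at x = 0; the second integral vanishes at infinity. *)

Definition gauss (t : R) : R := exp (- (t * t)).
Definition gauss_prim (x : R) : R := RInt gauss 0 x.
Definition feynman (x t : R) : R := exp (- (x * x) * (1 + t * t)) / (1 + t * t).
Definition feynman_int (x : R) : R := RInt (feynman x) 0 1.

Lemma one_plus_sqr_pos (t : R) : 0 < 1 + t * t.
Proof. nra. Qed.

Lemma ex_RInt_gauss a b : ex_RInt gauss a b.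
Proof.
  apply ex_RInt_of_continuous; intros z _.
  apply continuous_of_ex_derive; unfold gauss; auto_derive; auto.
Qed.

Lemma ex_RInt_gauss_scal x a b : ex_RInt (fun t => gauss (x * t)) a b.
Proof.
  apply ex_RInt_of_continuous; intros z _.
  apply continuous_of_ex_derive; unfold gauss; auto_derive; auto.
Qed.

Lemma ex_RInt_feynman x a b : ex_RInt (feynman x) a b.
Proof.
  apply ex_RInt_of_continuous; intros z _. apply continuous_of_ex_derive.
  unfold feynman; auto_derive. pose proof (one_plus_sqr_pos z); lra.
Qed.

Lemma is_derive_gauss_prim x : is_derive gauss_prim x (gauss x).
Proof.
  apply (is_derive_RInt gauss gauss_prim 0 x).
  - apply filter_forall; intros y.
    apply (RInt_correct (V := R_CompleteNormedModule)), ex_RInt_gauss.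
  - apply continuous_of_ex_derive; unfold gauss; auto_derive; auto.
Qed.

Lemma gauss_prim_scal x : gauss_prim x = x * RInt (fun t => gauss (x * t)) 0 1.
Proof.
  unfold gauss_prim.
  assert (H := RInt_comp_lin (V := R_CompleteNormedModule) gauss x 0 0 1).
  replace (x * 0 + 0) with 0 in H by ring.
  replace (x * 1 + 0) with x in H by ring.
  rewrite <- H by apply ex_RInt_gauss.
  rewrite <- (RInt_scal (V := R_CompleteNormedModule)) by apply ex_RInt_gauss_scal.
  apply RInt_ext; intros. now rewrite Rplus_0_r.
Qed.

Lemma gauss_prim_opp x : gauss_prim (- x) = - gauss_prim x.
Proof.
  unfold gauss_prim.
  assert (H := RInt_comp_lin (V := R_CompleteNormedModule) gauss (-1) 0 0 x).
  replace (-1 * 0 + 0) with 0 in H by ring.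
  replace (-1 * x + 0) with (- x) in H by ring.
  rewrite <- H by apply ex_RInt_gauss.
  rewrite (RInt_ext _ (fun y => scal (-1) (gauss y))).
  - rewrite (RInt_scal (V := R_CompleteNormedModule)) by apply ex_RInt_gauss.
    unfold scal; simpl; unfold mult; simpl. ring.
  - intros. unfold gauss. do 3 f_equal. ring.
Qed.

Lemma gauss_prim_nonneg x : 0 <= x -> 0 <= gauss_prim x.
Proof.
  intros Hx. apply RInt_ge_0; [lra | apply ex_RInt_gauss |].
  intros; apply Rlt_le, exp_pos.
Qed.

Lemma is_derive_feynman_int x :
  is_derive feynman_int x (-2 * x * gauss x * RInt (fun t => gauss (x * t)) 0 1).
Proof.
  assert (Hd : forall u t, is_derive (fun z => feynman z t) u
                             (-2 * u * exp (- (u * u) * (1 + t * t)))).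
  { intros u t. unfold feynman. pose proof (one_plus_sqr_pos t).
    auto_derive; [lra | field; lra]. }
  replace (-2 * x * gauss x * RInt (fun t => gauss (x * t)) 0 1)
    with (RInt (fun t => Derive (fun u => feynman u t) x) 0 1).
  - apply (is_derive_RInt_param feynman 0 1 x).
    + apply filter_forall; intros; eexists; apply Hd.
    + intros u t.
      apply continuity_2d_pt_ext with (f := fun u v => (-2 * u) * exp (- (u * u) * (1 + v * v))).
      { intros; symmetry; apply is_derive_unique, Hd. }
      apply continuity_2d_pt_mult.
      * apply continuity_2d_pt_mult; [apply continuity_2d_pt_const | apply continuity_2d_pt_id1].
      * apply continuity_1d_2d_pt_comp; [apply derivable_continuous_pt, derivable_pt_exp |].
        apply continuity_2d_pt_mult.
        -- apply continuity_2d_pt_opp, continuity_2d_pt_mult; apply continuity_2d_pt_id1.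
        -- apply continuity_2d_pt_plus; [apply continuity_2d_pt_const |].
           apply continuity_2d_pt_mult; apply continuity_2d_pt_id2.
    + apply filter_forall; intros; apply ex_RInt_feynman.
  - rewrite (RInt_ext _ (fun t => scal (-2 * x * gauss x) (gauss (x * t)))).
    + now rewrite (RInt_scal (V := R_CompleteNormedModule)) by apply ex_RInt_gauss_scal.
    + intros t _. replace (Derive (fun u => feynman u t) x)
        with (-2 * x * exp (- (x * x) * (1 + t * t))) by (symmetry; apply is_derive_unique, Hd).
      unfold gauss, scal; simpl; unfold mult; simpl.
      replace (- (x * x) * (1 + t * t)) with (- (x * x) + - ((x * t) * (x * t))) by ring.
      rewrite exp_plus; ring.
Qed.

Lemma gauss_prim_sqr_add_feynman x : gauss_prim x * gauss_prim x + feynman_int x = PI / 4.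
Proof.
  set (K := fun y => gauss_prim y * gauss_prim y + feynman_int y).
  assert (HK : forall y, is_derive K y (zero : R)).
  { intros y. unfold K.
    replace (zero : R) with (plus (gauss y * gauss_prim y + gauss_prim y * gauss y)
                            (-2 * y * gauss y * RInt (fun t => gauss (y * t)) 0 1)).
    - apply (is_derive_plus (K := R_AbsRing) (V := R_NormedModule)).
      + apply (is_derive_mult (K := R_AbsRing)); try apply is_derive_gauss_prim.
        intros; unfold mult; simpl; ring.
      + apply is_derive_feynman_int.
    - unfold plus, zero; simpl. rewrite gauss_prim_scal. ring. }
  assert (K0 : K 0 = PI / 4).
  { unfold K, gauss_prim, feynman_int. rewrite RInt_point. unfold zero; simpl.
    rewrite (RInt_ext _ (fun t => / (1 + t ^ 2))).
    2:{ intros t _. unfold feynman.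
        replace (- (0 * 0) * (1 + t * t)) with 0 by ring. rewrite exp_0.
        unfold Rdiv; rewrite Rmult_1_l; f_equal; ring. }
    assert (Hatan : is_RInt (V := R_CompleteNormedModule) (fun t => / (1 + t ^ 2)) 0 1
                      (minus (atan 1) (atan 0))).
    { apply (is_RInt_derive (V := R_CompleteNormedModule) atan).
      - intros; apply is_derive_Reals, derivable_pt_lim_atan.
      - intros z _. apply continuous_of_ex_derive. auto_derive.
        pose proof (one_plus_sqr_pos z); simpl; nra. }
    rewrite (is_RInt_unique _ _ _ _ Hatan).
    unfold minus, plus, opp; simpl. rewrite atan_1, atan_0. ring. }
  fold (K x). rewrite <- K0.
  destruct (Rtotal_order x 0) as [Hx|[->|Hx]]; [| reflexivity |].
  - apply (eq_is_derive K); [intros; apply HK | exact Hx].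
  - symmetry; apply (eq_is_derive K); [intros; apply HK | exact Hx].
Qed.

Lemma feynman_int_bounds x : 0 <= feynman_int x <= exp (- (x * x)).
Proof.
  unfold feynman_int. split.
  - apply RInt_ge_0; [lra | apply ex_RInt_feynman |].
    intros t _. apply Rlt_le, Rdiv_lt_0_compat; [apply exp_pos | apply one_plus_sqr_pos].
  - apply Rle_trans with (RInt (fun _ => exp (- (x * x))) 0 1).
    + apply RInt_le; [lra | apply ex_RInt_feynman | apply (ex_RInt_const (V := R_CompleteNormedModule)) |].
      intros t Ht. unfold feynman. pose proof (one_plus_sqr_pos t).
      apply Rle_trans with (exp (- (x * x) * (1 + t * t))).
      * unfold Rdiv. rewrite <- (Rmult_1_r (exp _)) at 2.
        apply Rmult_le_compat_l; [apply Rlt_le, exp_pos |].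
        rewrite <- Rinv_1. apply Rinv_le_contravar; nra.
      * apply exp_le_exp. nra.
    + rewrite RInt_const. unfold scal; simpl; unfold mult; simpl. lra.
Qed.

Lemma gauss_prim_cvg eps :
  0 < eps -> exists X, forall x, X <= x -> Rabs (gauss_prim x - sqrt PI / 2) < eps.
Proof.
  intros He. set (s := sqrt PI / 2).
  assert (Hs : 0 < s) by (unfold s; pose proof (sqrt_lt_R0 PI PI_RGT_0); lra).
  assert (Hs2 : s * s = PI / 4).
  { unfold s. replace (sqrt PI / 2 * (sqrt PI / 2)) with (sqrt PI * sqrt PI / 4) by field.
    rewrite sqrt_sqrt; [reflexivity | pose proof PI_RGT_0; lra]. }
  assert (Hes : 0 < / (eps * s)) by (apply Rinv_0_lt_compat; nra).
  exists (1 + / (eps * s)). intros x Hx.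
  pose proof (gauss_prim_nonneg x ltac:(lra)) as HG.
  pose proof (gauss_prim_sqr_add_feynman x) as HK.
  pose proof (feynman_int_bounds x) as [HF0 HF1].
  (* |G - s| (G + s) = |G² - π/4| = feynman_int x <= e^(-x²) <= 1/(1+x) < eps s *)
  assert (Hkey : Rabs (gauss_prim x - s) * (gauss_prim x + s) = feynman_int x).
  { rewrite <- (Rabs_pos_eq (gauss_prim x + s)), <- Rabs_mult by lra.
    replace ((gauss_prim x - s) * (gauss_prim x + s)) with (- feynman_int x) by nra.
    rewrite Rabs_Ropp. apply Rabs_pos_eq; lra. }
  assert (Hexp : exp (- (x * x)) <= 1 / (1 + x)).
  { apply Rle_trans with (exp (- x)); [apply exp_le_exp; nra | apply exp_neg_le_inv; lra]. }
  assert (Hlt : 1 / (1 + x) < eps * s).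
  { apply Rlt_le_trans with (/ (/ (eps * s))); [| rewrite Rinv_inv; lra].
    unfold Rdiv; rewrite Rmult_1_l. apply Rinv_lt_contravar; nra. }
  assert (Rabs (gauss_prim x - s) * s <= Rabs (gauss_prim x - s) * (gauss_prim x + s))
    by (apply Rmult_le_compat_l; [apply Rabs_pos | lra]).
  apply Rmult_lt_reg_r with s; lra.
Qed.

Section GaussianDensity.
Variable tau : R.
Hypothesis Htau : 0 < tau.

Lemma gdens_pos z : 0 < gdens tau z.
Proof.
  unfold gdens. apply Rdiv_lt_0_compat; [apply exp_pos |].
  apply sqrt_lt_R0. pose proof PI_RGT_0. nra.
Qed.

Lemma gdens_opp z : gdens tau (- z) = gdens tau z.
Proof. unfold gdens. do 3 f_equal. ring. Qed.

Lemma is_derive_gdens z : is_derive (gdens tau) z (- (z / tau) * gdens tau z).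
Proof.
  unfold gdens. pose proof PI_RGT_0.
  assert (0 < sqrt (2 * PI * tau)) by (apply sqrt_lt_R0; nra).
  auto_derive; [lra |].
  replace (- z ^ 2 / (2 * tau)) with (- (z * (z * 1)) * / (2 * tau)) by (field; lra).
  field. lra.
Qed.

Definition gauss_cdf (z : R) : R := gauss_prim (z / sqrt (2 * tau)) / sqrt PI.

Lemma is_derive_gauss_cdf z : is_derive gauss_cdf z (gdens tau z).
Proof.
  unfold gauss_cdf. set (s := sqrt (2 * tau)).
  assert (Hs : 0 < s) by (apply sqrt_lt_R0; lra).
  assert (Hpi : 0 < sqrt PI) by apply sqrt_lt_R0, PI_RGT_0.
  auto_derive; [eexists; apply is_derive_gauss_prim |].
  replace (Derive (fun x => gauss_prim x) (z * / s)) with (gauss (z / s))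
    by (symmetry; apply is_derive_unique, is_derive_gauss_prim).
  unfold gdens, gauss. replace (- z ^ 2 / (2 * tau)) with (- (z / s * (z / s))).
  - replace (sqrt (2 * PI * tau)) with (sqrt PI * s).
    + field. split; lra.
    + unfold s. rewrite <- sqrt_mult by (pose proof PI_RGT_0; lra). f_equal. ring.
  - replace (z / s * (z / s)) with (z * z / (s * s)) by (field; lra).
    unfold s. rewrite sqrt_sqrt by lra. field. lra.
Qed.

Lemma gauss_cdf_opp z : gauss_cdf (- z) = - gauss_cdf z.
Proof.
  unfold gauss_cdf. replace (- z / sqrt (2 * tau)) with (- (z / sqrt (2 * tau))) by (unfold Rdiv; ring).
  rewrite gauss_prim_opp. unfold Rdiv; ring.
Qed.

Lemma gauss_cdf_cvg eps : 0 < eps -> exists Y, forall y, Y <= y -> Rabs (gauss_cdf y - 1 / 2) < eps.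
Proof.
  intros He. set (s := sqrt (2 * tau)).
  assert (Hs : 0 < s) by (apply sqrt_lt_R0; lra).
  assert (Hpi : 0 < sqrt PI) by apply sqrt_lt_R0, PI_RGT_0.
  destruct (gauss_prim_cvg (eps * sqrt PI)) as [X HX]; [nra |].
  exists (X * s). intros y Hy.
  assert (HXy : X <= y / s).
  { apply (Rmult_le_reg_r s); [lra |]. replace (y / s * s) with y by (field; lra). lra. }
  specialize (HX _ HXy).
  unfold gauss_cdf. fold s.
  replace (gauss_prim (y / s) / sqrt PI - 1 / 2) with ((gauss_prim (y / s) - sqrt PI / 2) / sqrt PI)
    by (field; lra).
  unfold Rdiv. rewrite Rabs_mult, (Rabs_pos_eq (/ sqrt PI)) by (left; apply Rinv_0_lt_compat; lra).
  apply (Rmult_lt_reg_r (sqrt PI)); [lra |]. rewrite Rmult_assoc, Rinv_l by lra. lra.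
Qed.

Lemma mul_gdens_cvg eps : 0 < eps -> exists Y, 1 <= Y /\ forall y, Y <= y -> y * gdens tau y < eps.
Proof.
  intros He. pose proof PI_RGT_0.
  set (K := sqrt (2 * PI * tau)).
  assert (HK : 0 < K) by (apply sqrt_lt_R0; nra).
  assert (Hp : 0 < 2 * tau / (K * eps)) by (apply Rdiv_lt_0_compat; nra).
  exists (1 + 2 * tau / (K * eps)). split; [lra |]. intros y Hy.
  (* e^(-y²/2τ) <= 2τ/y², so y gdens y <= 2τ/(K y) *)
  assert (Hb : exp (- y ^ 2 / (2 * tau)) <= 2 * tau / (y * y)).
  { replace (- y ^ 2 / (2 * tau)) with (- (y ^ 2 / (2 * tau))) by (field; lra).
    eapply Rle_trans; [apply exp_neg_le_inv; apply Rdiv_le_0_compat; nra |].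
    apply Rle_trans with (1 / (y ^ 2 / (2 * tau))).
    - apply Rmult_le_compat_l; [lra |]. apply Rinv_le_contravar; [apply Rdiv_lt_0_compat; nra | lra].
    - right. field. lra. }
  unfold gdens. fold K.
  apply Rle_lt_trans with (y * (2 * tau / (y * y)) / K).
  - unfold Rdiv at 1 3. rewrite !Rmult_assoc. apply Rmult_le_compat_l; [lra |].
    apply Rmult_le_compat_r; [left; apply Rinv_0_lt_compat; lra | exact Hb].
  - replace (y * (2 * tau / (y * y)) / K) with (2 * tau / (K * eps) * eps / y) by (field; lra).
    apply (Rmult_lt_reg_r y); [lra |].
    replace (2 * tau / (K * eps) * eps / y * y) with (2 * tau / (K * eps) * eps) by (field; lra).
    nra.
Qed.

Definition quad_gauss_prim (a b c z : R) : R :=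
  (a + c * tau) * gauss_cdf z - tau * (b + c * z) * gdens tau z.

Lemma is_derive_quad_gauss_prim a b c z :
  is_derive (quad_gauss_prim a b c) z ((a + b * z + c * z ^ 2) * gdens tau z).
Proof.
  unfold quad_gauss_prim. auto_derive.
  - repeat split; eexists; [apply is_derive_gauss_cdf | apply is_derive_gdens].
  - replace (Derive (fun x => gauss_cdf x) z) with (gdens tau z)
      by (symmetry; apply is_derive_unique, is_derive_gauss_cdf).
    replace (Derive (fun x => gdens tau x) z) with (- (z / tau) * gdens tau z)
      by (symmetry; apply is_derive_unique, is_derive_gdens).
    field. lra.
Qed.

Lemma RInt_quad_gdens a b c a0 c0 :
  ex_RInt (fun s => (a + b * s + c * s ^ 2) * gdens tau s) a0 c0 /\
  RInt (fun s => (a + b * s + c * s ^ 2) * gdens tau s) a0 c0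
    = quad_gauss_prim a b c c0 - quad_gauss_prim a b c a0.
Proof.
  assert (Hc : forall z, continuous (fun s => (a + b * s + c * s ^ 2) * gdens tau s) z).
  { intros z. apply continuous_of_ex_derive. auto_derive. eexists; apply is_derive_gdens. }
  split; [apply ex_RInt_of_continuous; intros; apply Hc |].
  apply is_RInt_unique, (is_RInt_derive (V := R_CompleteNormedModule)).
  - intros; apply is_derive_quad_gauss_prim.
  - intros; apply Hc.
Qed.

Lemma quad_gauss_prim_cvg a b c eps : 0 < eps -> exists Y, forall y, Y <= y ->
  Rabs (quad_gauss_prim a b c y - (a + c * tau) / 2) < eps /\
  Rabs (quad_gauss_prim a b c (- y) + (a + c * tau) / 2) < eps.
Proof.
  intros He.
  set (K1 := Rabs (a + c * tau) + 1). set (K2 := tau * (Rabs b + Rabs c) + 1).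
  assert (HK1 : 1 <= K1) by (unfold K1; pose proof (Rabs_pos (a + c * tau)); lra).
  assert (HK2 : 1 <= K2) by (unfold K2; pose proof (Rabs_pos b); pose proof (Rabs_pos c); nra).
  destruct (gauss_cdf_cvg (eps / (2 * K1))) as [Y1 HY1]; [apply Rdiv_lt_0_compat; lra |].
  destruct (mul_gdens_cvg (eps / (2 * K2))) as [Y2 [HY2a HY2]]; [apply Rdiv_lt_0_compat; lra |].
  exists (Rmax Y1 Y2). intros y Hy.
  pose proof (Rmax_l Y1 Y2). pose proof (Rmax_r Y1 Y2).
  specialize (HY1 y ltac:(lra)). specialize (HY2 y ltac:(lra)).
  pose proof (gdens_pos y) as Hg. assert (Hy1 : 1 <= y) by lra.
  (* both tails are bounded by K1 |cdf y - 1/2| + K2 y gdens y *)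
  assert (T1 : K1 * Rabs (gauss_cdf y - 1 / 2) < eps / 2).
  { apply Rlt_le_trans with (K1 * (eps / (2 * K1))); [apply Rmult_lt_compat_l; lra |].
    right; field; lra. }
  assert (T2 : K2 * (y * gdens tau y) < eps / 2).
  { apply Rlt_le_trans with (K2 * (eps / (2 * K2))); [apply Rmult_lt_compat_l; lra |].
    right; field; lra. }
  assert (Hlin : forall s, Rabs s <= Rabs c * y ->
            Rabs (tau * (b + s) * gdens tau y) <= K2 * (y * gdens tau y)).
  { intros s Hs. rewrite !Rabs_mult, (Rabs_pos_eq tau), (Rabs_pos_eq (gdens tau y)) by lra.
    pose proof (Rabs_triang b s). pose proof (Rabs_pos b). pose proof (Rabs_pos c).
    assert (Hbs : Rabs (b + s) <= (Rabs b + Rabs c) * y) by nra.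
    assert (0 <= tau * gdens tau y) by nra.
    unfold K2. nra. }
  assert (Hcy : Rabs (c * y) <= Rabs c * y) by (rewrite Rabs_mult, (Rabs_pos_eq y); lra).
  assert (Hcdf : Rabs (a + c * tau) * Rabs (gauss_cdf y - 1 / 2) <= K1 * Rabs (gauss_cdf y - 1 / 2))
    by (apply Rmult_le_compat_r; [apply Rabs_pos | unfold K1; lra]).
  unfold quad_gauss_prim. rewrite gauss_cdf_opp, gdens_opp. split.
  - replace ((a + c * tau) * gauss_cdf y - tau * (b + c * y) * gdens tau y - (a + c * tau) / 2)
      with ((a + c * tau) * (gauss_cdf y - 1 / 2) + - (tau * (b + c * y) * gdens tau y)) by field.
    eapply Rle_lt_trans; [apply Rabs_triang |].
    rewrite Rabs_Ropp, Rabs_mult. pose proof (Hlin _ Hcy). lra.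
  - replace ((a + c * tau) * - gauss_cdf y - tau * (b + c * - y) * gdens tau y + (a + c * tau) / 2)
      with (- ((a + c * tau) * (gauss_cdf y - 1 / 2)) + - (tau * (b + - (c * y)) * gdens tau y)) by field.
    eapply Rle_lt_trans; [apply Rabs_triang |].
    rewrite !Rabs_Ropp, Rabs_mult. rewrite <- Rabs_Ropp in Hcy. pose proof (Hlin _ Hcy). lra.
Qed.

End GaussianDensity.

(** * One-dimensional Gaussian expectations *)

Lemma gauss1_iff tau g lv : gauss1 tau g lv <->
  (forall a c, ex_RInt (fun z => g z * gdens tau z) a c) /\
  (forall eps, 0 < eps -> exists A, forall a c, a <= - A -> A <= c ->
      Rabs (RInt (fun z => g z * gdens tau z) a c - lv) < eps).
Proof.
  split.
  - intros [pr H]. split; [intros a c; apply ex_RInt_Reals_1, pr |].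
    intros eps He. destruct (H eps He) as [A HA]. exists A. intros a c Ha Hc.
    rewrite (RInt_Reals _ _ _ (pr a c)). now apply HA.
  - intros [H1 H2]. exists (fun a c => ex_RInt_Reals_0 _ _ _ (H1 a c)).
    intros eps He. destruct (H2 eps He) as [A HA]. exists A. intros a c Ha Hc.
    rewrite <- RInt_Reals. now apply HA.
Qed.

Lemma gauss1_ext tau f g v w :
  (forall s, f s = g s) -> v = w -> gauss1 tau f v -> gauss1 tau g w.
Proof.
  intros Hfg <-. replace g with f; [auto |]. now apply functional_extensionality.
Qed.

Lemma gauss1_quad tau a b c : 0 < tau ->
  gauss1 tau (fun s => a + b * s + c * s ^ 2) (a + c * tau).
Proof.
  intros Ht. apply gauss1_iff. split; [intros; apply RInt_quad_gdens; auto |].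
  intros eps He. destruct (quad_gauss_prim_cvg tau Ht a b c (eps / 2)) as [Y HY]; [lra |].
  exists Y. intros a0 c0 Ha Hc. rewrite (proj2 (RInt_quad_gdens tau Ht a b c a0 c0)).
  destruct (HY c0 Hc) as [H1 _]. destruct (HY (- a0)) as [_ H2]; [lra |].
  rewrite Ropp_involutive in H2.
  replace (quad_gauss_prim tau a b c c0 - quad_gauss_prim tau a b c a0 - (a + c * tau))
    with ((quad_gauss_prim tau a b c c0 - (a + c * tau) / 2)
          + - (quad_gauss_prim tau a b c a0 + (a + c * tau) / 2)) by field.
  eapply Rle_lt_trans; [apply Rabs_triang |]. rewrite Rabs_Ropp. lra.
Qed.

Lemma gauss1_lin tau f g a b k : gauss1 tau f a -> gauss1 tau g b ->
  gauss1 tau (fun s => f s + k * g s) (a + k * b).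
Proof.
  intros [Hf1 Hf2]%gauss1_iff [Hg1 Hg2]%gauss1_iff.
  set (If := fun a0 c0 => RInt (fun z => f z * gdens tau z) a0 c0).
  set (Ig := fun a0 c0 => RInt (fun z => g z * gdens tau z) a0 c0).
  assert (Heq : forall a0 c0,
    ex_RInt (fun z => (f z + k * g z) * gdens tau z) a0 c0 /\
    RInt (fun z => (f z + k * g z) * gdens tau z) a0 c0 = If a0 c0 + k * Ig a0 c0).
  { intros a0 c0.
    assert (Hext : forall z, plus (f z * gdens tau z) (scal k (g z * gdens tau z))
                             = (f z + k * g z) * gdens tau z).
    { intros z. unfold plus, scal; simpl; unfold plus, mult; simpl. ring. }
    split.
    - eapply ex_RInt_ext; [intros; apply Hext |].
      apply (ex_RInt_plus (V := R_NormedModule)); [apply Hf1 |].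
      apply (ex_RInt_scal (V := R_NormedModule)), Hg1.
    - rewrite <- (RInt_ext (fun z => plus (f z * gdens tau z) (scal k (g z * gdens tau z))))
        by (intros; apply Hext).
      rewrite (RInt_plus (V := R_CompleteNormedModule)), (RInt_scal (V := R_CompleteNormedModule));
        [reflexivity | apply Hg1 | apply Hf1 | apply (ex_RInt_scal (V := R_NormedModule)), Hg1]. }
  apply gauss1_iff. split; [intros; apply Heq |].
  intros eps He. set (K := Rabs k + 1).
  assert (HK : 1 <= K) by (unfold K; pose proof (Rabs_pos k); lra).
  destruct (Hf2 (eps / 2)) as [A1 HA1]; [lra |].
  destruct (Hg2 (eps / (2 * K))) as [A2 HA2]; [apply Rdiv_lt_0_compat; lra |].
  exists (Rmax A1 A2). intros a0 c0 Ha Hc.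
  pose proof (Rmax_l A1 A2). pose proof (Rmax_r A1 A2).
  specialize (HA1 a0 c0 ltac:(lra) ltac:(lra)). specialize (HA2 a0 c0 ltac:(lra) ltac:(lra)).
  fold (If a0 c0) in HA1. fold (Ig a0 c0) in HA2.
  rewrite (proj2 (Heq a0 c0)).
  replace (If a0 c0 + k * Ig a0 c0 - (a + k * b)) with ((If a0 c0 - a) + k * (Ig a0 c0 - b)) by ring.
  eapply Rle_lt_trans; [apply Rabs_triang |]. rewrite Rabs_mult.
  assert (Rabs k * Rabs (Ig a0 c0 - b) <= K * Rabs (Ig a0 c0 - b))
    by (apply Rmult_le_compat_r; [apply Rabs_pos | unfold K; lra]).
  assert (K * Rabs (Ig a0 c0 - b) < K * (eps / (2 * K))) by (apply Rmult_lt_compat_l; lra).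
  replace (K * (eps / (2 * K))) with (eps / 2) in * by (field; lra).
  lra.
Qed.

Lemma gauss1_le tau f g a b : 0 < tau -> gauss1 tau f a -> gauss1 tau g b ->
  (forall s, f s <= g s) -> a <= b.
Proof.
  intros Ht [Hf1 Hf2]%gauss1_iff [Hg1 Hg2]%gauss1_iff Hfg.
  destruct (Rle_or_lt a b) as [H | H]; [exact H | exfalso].
  destruct (Hf2 ((a - b) / 2)) as [A1 HA1]; [lra |].
  destruct (Hg2 ((a - b) / 2)) as [A2 HA2]; [lra |].
  set (A := Rmax 0 (Rmax A1 A2)).
  pose proof (Rmax_l 0 (Rmax A1 A2)). pose proof (Rmax_r 0 (Rmax A1 A2)).
  pose proof (Rmax_l A1 A2). pose proof (Rmax_r A1 A2).
  specialize (HA1 (- A) A ltac:(unfold A; lra) ltac:(unfold A; lra)).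
  specialize (HA2 (- A) A ltac:(unfold A; lra) ltac:(unfold A; lra)).
  assert (RInt (fun z => f z * gdens tau z) (- A) A <= RInt (fun z => g z * gdens tau z) (- A) A).
  { apply RInt_le; [unfold A; lra | apply Hf1 | apply Hg1 |]. intros x _.
    apply Rmult_le_compat_r; [left; apply gdens_pos; auto | apply Hfg]. }
  apply Rabs_def2 in HA1. apply Rabs_def2 in HA2. lra.
Qed.

(** * Finite sums and the Euclidean norm *)

Lemma sumn_ext n f g : (forall i, (i < n)%nat -> f i = g i) -> sumn n f = sumn n g.
Proof.
  revert f g; induction n; intros f g H; simpl; [reflexivity |].
  rewrite (IHn f g) by (intros; apply H; lia). rewrite H by lia. reflexivity.
Qed.

Lemma sumn_add n f g : sumn n (fun i => f i + g i) = sumn n f + sumn n g.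
Proof. induction n; simpl; [ring | rewrite IHn; ring]. Qed.

Lemma sumn_sub n f g : sumn n (fun i => f i - g i) = sumn n f - sumn n g.
Proof. induction n; simpl; [ring | rewrite IHn; ring]. Qed.

Lemma sumn_scal n k f : sumn n (fun i => k * f i) = k * sumn n f.
Proof. induction n; simpl; [ring | rewrite IHn; ring]. Qed.

Lemma sumn_zero n : sumn n (fun _ => 0) = 0.
Proof. induction n; simpl; [ring | rewrite IHn; ring]. Qed.

Lemma sumn_swap n m (f : nat -> nat -> R) :
  sumn n (fun i => sumn m (fun j => f i j)) = sumn m (fun j => sumn n (fun i => f i j)).
Proof.
  induction n; simpl; [now rewrite sumn_zero |].
  rewrite IHn, <- sumn_add. reflexivity.
Qed.

Lemma sumn_le n f g : (forall i, (i < n)%nat -> f i <= g i) -> sumn n f <= sumn n g.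
Proof.
  revert f g; induction n; intros f g H; simpl; [lra |].
  assert (sumn n f <= sumn n g) by (apply IHn; intros; apply H; lia).
  assert (f n <= g n) by (apply H; lia). lra.
Qed.

Lemma sumn_nonneg n f : (forall i, (i < n)%nat -> 0 <= f i) -> 0 <= sumn n f.
Proof. intros H. rewrite <- (sumn_zero n). now apply sumn_le. Qed.

Lemma sumn_abs n f : Rabs (sumn n f) <= sumn n (fun i => Rabs (f i)).
Proof.
  induction n; simpl; [rewrite Rabs_R0; lra |].
  eapply Rle_trans; [apply Rabs_triang | lra].
Qed.

Lemma sumn_ge_term n f i :
  (forall j, (j < n)%nat -> 0 <= f j) -> (i < n)%nat -> f i <= sumn n f.
Proof.
  revert f; induction n; intros f H Hi; [lia |]. simpl.
  assert (0 <= f n) by (apply H; lia).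
  destruct (Nat.eq_dec i n) as [-> | Hin].
  - assert (0 <= sumn n f) by (apply sumn_nonneg; intros; apply H; lia). lra.
  - assert (f i <= sumn n f) by (apply IHn; [intros; apply H |]; lia). lra.
Qed.

Lemma sumn_simplex_abs_le I (p : vec) (f : nat -> R) C :
  simplex I p -> (forall i, (i < I)%nat -> Rabs (f i) <= C) ->
  Rabs (sumn I (fun i => p i * f i)) <= C.
Proof.
  intros [Hp Hp1] Hf. eapply Rle_trans; [apply sumn_abs |].
  rewrite <- (Rmult_1_r C), <- Hp1, <- sumn_scal. apply sumn_le. intros i Hi.
  rewrite Rabs_mult, Rabs_pos_eq by auto. rewrite Rmult_comm.
  apply Rmult_le_compat_r; auto.
Qed.

Definition vsub (x y : vec) : vec := fun i => x i - y i.
Definition mtr (A : mat) : mat := fun i j => A j i.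
Definition msub (A B : mat) : mat := fun i j => A i j - B i j.

Lemma norm_sq n v : norm n v ^ 2 = sumn n (fun i => v i ^ 2).
Proof.
  unfold norm. rewrite pow2_sqrt; [apply sumn_ext; intros; ring |].
  apply sumn_nonneg; intros; nra.
Qed.

Lemma norm_nonneg n v : 0 <= norm n v.
Proof. apply sqrt_pos. Qed.

Lemma norm_le_sq n v C : 0 <= C -> sumn n (fun i => v i ^ 2) <= C ^ 2 -> norm n v <= C.
Proof. intros HC H. rewrite <- norm_sq in H. pose proof (norm_nonneg n v). nra. Qed.

Lemma coord_le_norm n v i : (i < n)%nat -> Rabs (v i) <= norm n v.
Proof.
  intros Hi. rewrite <- (Rabs_pos_eq (norm n v)) by apply norm_nonneg.
  apply Rsqr_le_abs_0. unfold Rsqr.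
  replace (norm n v * norm n v) with (norm n v ^ 2) by ring. rewrite norm_sq.
  replace (v i * v i) with (v i ^ 2) by ring.
  apply (sumn_ge_term n (fun j => v j ^ 2)); auto. intros; nra.
Qed.

(* Inductive step of Cauchy–Schwarz: 2 S a b <= U b² + V a² because (U b² - V a²)² >= 0. *)
Lemma cauchy_schwarz_step S U V a b : 0 <= U -> 0 <= V -> S ^ 2 <= U * V ->
  (S + a * b) ^ 2 <= (U + a ^ 2) * (V + b ^ 2).
Proof.
  intros HU HV HS.
  assert (H : Rabs (2 * S * a * b) <= Rabs (U * b ^ 2 + a ^ 2 * V)).
  { apply Rsqr_le_abs_0. unfold Rsqr.
    assert (0 <= (U * b ^ 2 - a ^ 2 * V) ^ 2) by apply pow2_ge_0.
    assert (S ^ 2 * (a ^ 2 * b ^ 2) <= U * V * (a ^ 2 * b ^ 2)) by (apply Rmult_le_compat_r; nra).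
    nra. }
  rewrite (Rabs_pos_eq (U * b ^ 2 + a ^ 2 * V)) in H by nra.
  pose proof (Rle_abs (2 * S * a * b)). nra.
Qed.

Lemma dot_sq_le n u v : dot n u v ^ 2 <= norm n u ^ 2 * norm n v ^ 2.
Proof.
  rewrite !norm_sq. unfold dot. induction n; simpl; [lra |].
  apply cauchy_schwarz_step; auto; apply sumn_nonneg; intros; nra.
Qed.

Lemma dot_le_norm n u v : Rabs (dot n u v) <= norm n u * norm n v.
Proof.
  pose proof (norm_nonneg n u). pose proof (norm_nonneg n v).
  rewrite <- (Rabs_pos_eq (norm n u * norm n v)) by nra.
  apply Rsqr_le_abs_0. unfold Rsqr. pose proof (dot_sq_le n u v). nra.
Qed.

Lemma norm_triang n u v : norm n (vadd u v) <= norm n u + norm n v.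
Proof.
  pose proof (norm_nonneg n u). pose proof (norm_nonneg n v).
  apply norm_le_sq; [lra |].
  replace (sumn n (fun i => vadd u v i ^ 2))
    with (norm n u ^ 2 + 2 * dot n u v + norm n v ^ 2).
  - pose proof (Rle_abs (dot n u v)). pose proof (dot_le_norm n u v). nra.
  - rewrite !norm_sq. unfold dot, vadd. rewrite <- sumn_scal, <- !sumn_add.
    apply sumn_ext; intros; ring.
Qed.

Lemma mnorm_sq n A : mnorm n A ^ 2 = sumn n (fun i => sumn n (fun j => A i j ^ 2)).
Proof.
  unfold mnorm. apply pow2_sqrt. apply sumn_nonneg; intros; apply sumn_nonneg; intros; nra.
Qed.

Lemma mnorm_nonneg n A : 0 <= mnorm n A.
Proof. apply sqrt_pos. Qed.

Lemma mnorm_mtr n A : mnorm n (mtr A) = mnorm n A.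
Proof. unfold mnorm, mtr. now rewrite sumn_swap. Qed.

Lemma norm_matvec_le n A v : norm n (matvec n A v) <= mnorm n A * norm n v.
Proof.
  pose proof (mnorm_nonneg n A). pose proof (norm_nonneg n v).
  apply norm_le_sq; [nra |].
  rewrite Rpow_mult_distr, mnorm_sq, Rmult_comm, <- sumn_scal. apply sumn_le. intros i _.
  pose proof (dot_sq_le n (A i) v) as Hi. rewrite (norm_sq n (A i)) in Hi. rewrite Rmult_comm. exact Hi.
Qed.

Lemma norm_ext n u v : (forall i, (i < n)%nat -> u i = v i) -> norm n u = norm n v.
Proof. intros H. unfold norm, dot. f_equal. apply sumn_ext. intros i Hi. now rewrite H. Qed.

Lemma dot_matvec_mtr n v A z : dot n v (matvec n A z) = dot n (matvec n (mtr A) v) z.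
Proof.
  unfold dot, matvec, mtr.
  rewrite (sumn_ext n _ (fun i => sumn n (fun j => v i * A i j * z j)))
    by (intros; rewrite <- sumn_scal; apply sumn_ext; intros; ring).
  rewrite sumn_swap. apply sumn_ext. intros j _.
  rewrite Rmult_comm, <- sumn_scal. apply sumn_ext; intros; ring.
Qed.

Lemma matvec_msub n A B z i : matvec n (msub A B) z i = matvec n A z i - matvec n B z i.
Proof. unfold matvec, msub. rewrite <- sumn_sub. apply sumn_ext; intros; ring. Qed.

Lemma matvec_vsub n A u v i : matvec n A (vsub u v) i = matvec n A u i - matvec n A v i.
Proof. unfold matvec, vsub. rewrite <- sumn_sub. apply sumn_ext; intros; ring. Qed.

(** * Gaussian expectations in R^n *)

Lemma vupd_eq z m s : vupd z m s m = s.
Proof. unfold vupd. now rewrite Nat.eqb_refl. Qed.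

Lemma sumn_vupd n z s (h : nat -> R -> R) :
  sumn n (fun i => h i (vupd z n s i)) = sumn n (fun i => h i (z i)).
Proof.
  apply sumn_ext; intros i Hi. unfold vupd.
  destruct (Nat.eqb_spec i n); [lia | reflexivity].
Qed.

Lemma gauss_int_ext n tau F G a b :
  (forall z, F z = G z) -> a = b -> gauss_int n tau F a -> gauss_int n tau G b.
Proof.
  intros HFG <-. replace G with F; [auto |]. now apply functional_extensionality.
Qed.

Lemma gauss_int_lin n tau F G a b k : gauss_int n tau F a -> gauss_int n tau G b ->
  gauss_int n tau (fun z => F z + k * G z) (a + k * b).
Proof.
  revert F G a b; induction n; intros F G a b HF HG; simpl in *; [now subst |].
  destruct HF as [GF [HF1 HF2]], HG as [GG [HG1 HG2]].
  exists (fun z => GF z + k * GG z). split; [intros z; apply gauss1_lin; auto | auto].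
Qed.

Lemma gauss_int_scal n tau F a k : gauss_int n tau F a -> gauss_int n tau (fun z => k * F z) (k * a).
Proof.
  intros H. eapply gauss_int_ext; [| | exact (gauss_int_lin n tau F F a a (k - 1) H H)];
    intros; cbv beta; ring.
Qed.

Lemma gauss_int_le n tau F G a b : 0 < tau -> gauss_int n tau F a -> gauss_int n tau G b ->
  (forall z, F z <= G z) -> a <= b.
Proof.
  revert F G a b; induction n; intros F G a b Ht HF HG HFG; simpl in *; [subst; apply HFG |].
  destruct HF as [GF [HF1 HF2]], HG as [GG [HG1 HG2]].
  apply (IHn GF GG); auto. intros z.
  apply (gauss1_le tau (fun s => F (vupd z n s)) (fun s => G (vupd z n s))); auto.
Qed.

Lemma gauss_int_abs_le n tau F G a b : 0 < tau -> gauss_int n tau F a -> gauss_int n tau G b ->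
  (forall z, Rabs (F z) <= G z) -> Rabs a <= b.
Proof.
  intros Ht HF HG HFG. apply Rabs_le. split.
  - assert (-1 * a <= b); [| lra].
    apply (gauss_int_le n tau (fun z => -1 * F z) G); auto using gauss_int_scal.
    intros z. pose proof (Rle_abs (- F z)). rewrite Rabs_Ropp in *. pose proof (HFG z). lra.
  - apply (gauss_int_le n tau F G); auto. intros z. pose proof (Rle_abs (F z)). pose proof (HFG z). lra.
Qed.

Lemma gauss_int_affine n tau (beta : vec) alpha : 0 < tau ->
  gauss_int n tau (fun z => alpha + dot n beta z) alpha.
Proof.
  intros Ht. revert alpha. induction n; intros alpha; simpl; [unfold dot; simpl; ring |].
  exists (fun z => alpha + dot n beta z). split; [| apply IHn].
  intros z. eapply gauss1_ext; [| | exact (gauss1_quad tau (alpha + dot n beta z) (beta n) 0 Ht)].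
  - intros s. unfold dot. simpl. rewrite (sumn_vupd n z s (fun i x => beta i * x)), vupd_eq. ring.
  - ring.
Qed.

Lemma gauss_int_sum n tau m (F : nat -> vec -> R) (v k : nat -> R) : 0 < tau ->
  (forall i, (i < m)%nat -> gauss_int n tau (F i) (v i)) ->
  gauss_int n tau (fun z => sumn m (fun i => k i * F i z)) (sumn m (fun i => k i * v i)).
Proof.
  intros Ht HF. induction m; simpl.
  - eapply gauss_int_ext; [| | exact (gauss_int_affine n tau (fun _ => 0) 0 Ht)].
    + intros z. unfold dot. rewrite (sumn_ext n _ (fun _ => 0)), sumn_zero by (intros; ring). ring.
    + reflexivity.
  - apply (gauss_int_lin _ _ _ _ _ _ (k m)); [apply IHm; intros; apply HF | apply HF]; lia.
Qed.

Lemma sumn_sqr_affine K (u v : vec) s :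
  sumn K (fun k => (u k + v k * s) ^ 2) =
  sumn K (fun k => u k ^ 2) + sumn K (fun k => 2 * u k * v k) * s + sumn K (fun k => v k ^ 2) * s ^ 2.
Proof. induction K; cbn [sumn]; [ring | rewrite IHK; ring]. Qed.

Lemma gauss_int_sqr_affine n tau K (c : vec) (A : mat) alpha : 0 < tau ->
  gauss_int n tau (fun z => alpha + sumn K (fun k => (c k + matvec n A z k) ^ 2))
    (alpha + sumn K (fun k => c k ^ 2) + tau * sumn n (fun i => sumn K (fun k => A k i ^ 2))).
Proof.
  intros Ht. revert alpha. induction n; intros alpha; cbn [gauss_int sumn].
  - unfold matvec; cbn [sumn]. rewrite (sumn_ext K (fun k => (c k + 0) ^ 2) (fun k => c k ^ 2)) by (intros; ring). ring.
  - set (a := sumn K (fun k => A k n ^ 2)).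
    exists (fun z => (alpha + tau * a) + sumn K (fun k => (c k + matvec n A z k) ^ 2)).
    split.
    + intros z. set (u := fun k => c k + matvec n A z k).
      eapply gauss1_ext;
        [| | exact (gauss1_quad tau (alpha + sumn K (fun k => u k ^ 2)) (sumn K (fun k => 2 * u k * A k n)) a Ht)].
      * intros s. unfold a.
        transitivity (alpha + sumn K (fun k => (u k + A k n * s) ^ 2));
          [rewrite sumn_sqr_affine; ring |].
        f_equal. apply sumn_ext; intros k _.
        unfold u, matvec; cbn [sumn]. rewrite (sumn_vupd n z s (fun j x => A k j * x)), vupd_eq. ring.
      * unfold u. ring.
    + eapply gauss_int_ext; [reflexivity | | exact (IHn (alpha + tau * a))]. unfold a. ring.
Qed.

Lemma gauss_int_sqr_dot n tau c (beta : vec) : 0 < tau ->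
  gauss_int n tau (fun z => (c + dot n beta z) ^ 2) (c ^ 2 + tau * norm n beta ^ 2).
Proof.
  intros Ht. eapply gauss_int_ext;
    [| | exact (gauss_int_sqr_affine n tau 1 (fun _ => c) (fun _ => beta) 0 Ht)].
  - intros z. cbn [sumn]. unfold matvec, dot. ring.
  - rewrite norm_sq. cbn [sumn].
    rewrite (sumn_ext n (fun i => 0 + beta i ^ 2) (fun i => beta i ^ 2)) by (intros; ring). ring.
Qed.

Lemma gauss_int_sqr_norm n tau (c : vec) (A : mat) : 0 < tau ->
  gauss_int n tau (fun z => norm n (vadd c (matvec n A z)) ^ 2) (norm n c ^ 2 + tau * mnorm n A ^ 2).
Proof.
  intros Ht. eapply gauss_int_ext; [| | exact (gauss_int_sqr_affine n tau n c A 0 Ht)].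
  - intros z. rewrite norm_sq. unfold vadd. ring.
  - rewrite norm_sq, mnorm_sq, (sumn_swap n n (fun k i => A k i ^ 2)). ring.
Qed.

Lemma gauss_int_affine_weight n tau F (si : mat) (bb : vec) a (w : vec) : 0 < tau ->
  gauss_int n tau F a ->
  (forall i, (i < n)%nat -> gauss_int n tau (fun z => F z * matvec n si z i) (w i)) ->
  gauss_int n tau (fun z => F z * (1 + dot n (matvec n (mtr si) bb) z)) (a + dot n bb w).
Proof.
  intros Ht HF HW.
  eapply gauss_int_ext;
    [| | exact (gauss_int_lin _ _ _ _ _ _ 1 HF (gauss_int_sum n tau n _ w bb Ht HW))].
  - intros z. rewrite <- dot_matvec_mtr. unfold dot.
    rewrite Rmult_plus_distr_l, Rmult_1_r, Rmult_1_l, <- sumn_scal.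
    f_equal. apply sumn_ext; intros; ring.
  - unfold dot. ring.
Qed.

(** * Comparison of inf-sup values *)

Lemma sup_R_is_lub (P : R -> Prop) C :
  (exists y, P y) -> (forall y, P y -> y <= C) -> is_lub P (sup_R P).
Proof.
  intros [y Hy] HC. unfold sup_R. apply epsilon_spec.
  destruct (completeness P) as [m Hm]; [exists C; exact HC | exists y; exact Hy | now exists m].
Qed.

Lemma sup_R_abs_le (P : R -> Prop) C :
  (exists y, P y) -> (forall y, P y -> Rabs y <= C) -> Rabs (sup_R P) <= C.
Proof.
  intros [y Hy] HC.
  assert (Hub : forall y, P y -> y <= C) by (intros z Hz; pose proof (HC z Hz); pose proof (Rle_abs z); lra).
  destruct (sup_R_is_lub P C (ex_intro _ y Hy) Hub) as [Hs1 Hs2].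
  pose proof (Hs1 y Hy). pose proof (Hs2 C Hub).
  apply Rabs_le_between. pose proof (proj1 (Rabs_le_between _ _) (HC y Hy)). lra.
Qed.

Lemma sup_R_le_shift (P Q : R -> Prop) C K :
  (exists y, P y) -> (forall y, P y -> y <= C) ->
  (exists y, Q y) -> (forall y, Q y -> y <= C) ->
  (forall y, P y -> exists y', Q y' /\ y <= y' + K) -> sup_R P <= sup_R Q + K.
Proof.
  intros HP HPC HQ HQC HPQ.
  destruct (sup_R_is_lub P C HP HPC) as [_ Hs]. destruct (sup_R_is_lub Q C HQ HQC) as [Hq _].
  apply Hs. intros y Hy. destruct (HPQ y Hy) as [y' [Hy' Hle]]. specialize (Hq y' Hy'). lra.
Qed.

(* [Hinfsup d I U V b l t x xi p] unfolds to [inf_sup U V] of the Hamiltonian payoff. *)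
Definition inf_sup (U V : vec -> Prop) (f : vec -> vec -> R) : R :=
  inf_R (fun w => exists u, U u /\ w = sup_R (fun z => exists v, V v /\ z = f u v)).

Section InfSup.
Variables (U V : vec -> Prop) (C : R).
Hypotheses (HU : exists u, U u) (HV : exists v, V v).

Let sup_v (f : vec -> vec -> R) (u : vec) : R := sup_R (fun z => exists v, V v /\ z = f u v).

Lemma inf_sup_le_shift (f g : vec -> vec -> R) K :
  (forall u v, U u -> V v -> Rabs (f u v) <= C) ->
  (forall u v, U u -> V v -> Rabs (g u v) <= C) ->
  (forall u v, U u -> V v -> f u v <= g u v + K) ->
  inf_sup U V f <= inf_sup U V g + K.
Proof.
  intros Hf Hg Hfg. destruct HU as [u0 Hu0]. destruct HV as [v0 Hv0].
  assert (Hle : forall h, (forall u v, U u -> V v -> Rabs (h u v) <= C) ->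
                  forall u v, U u -> V v -> h u v <= C).
  { intros h Hh u v Hu Hv. pose proof (Hh u v Hu Hv). pose proof (Rle_abs (h u v)). lra. }
  assert (Hsup : forall h, (forall u v, U u -> V v -> Rabs (h u v) <= C) ->
                   forall u, U u -> - C <= sup_v h u <= C).
  { intros h Hh u Hu. apply Rabs_le_between, sup_R_abs_le; [now exists (h u v0), v0 |].
    intros y [v [Hv ->]]. auto. }
  assert (Hfg' : forall u, U u -> sup_v f u <= sup_v g u + K).
  { intros u Hu. apply (sup_R_le_shift _ _ C).
    - now exists (f u v0), v0.
    - intros y [v [Hv ->]]. now apply Hle.
    - now exists (g u v0), v0.
    - intros y [v [Hv ->]]. now apply Hle.
    - intros y [v [Hv ->]]. exists (g u v). split; [now exists v | auto]. }
  unfold inf_sup, inf_R.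
  enough (sup_R (fun y => exists u, U u /\ - y = sup_v g u)
          <= sup_R (fun y => exists u, U u /\ - y = sup_v f u) + K) by (unfold sup_v in *; lra).
  apply (sup_R_le_shift _ _ C).
  - exists (- sup_v g u0), u0. split; [auto | ring].
  - intros y [u [Hu Hy]]. pose proof (Hsup g Hg u Hu). lra.
  - exists (- sup_v f u0), u0. split; [auto | ring].
  - intros y [u [Hu Hy]]. pose proof (Hsup f Hf u Hu). lra.
  - intros y [u [Hu Hy]]. exists (- sup_v f u). split; [exists u; split; [auto | ring] |].
    pose proof (Hfg' u Hu). lra.
Qed.

End InfSup.

Lemma inf_sup_Rabs_le (U V : vec -> Prop) C (f g : vec -> vec -> R) a a' tau K :
  (exists u, U u) -> (exists v, V v) -> 0 < tau ->
  (forall u v, U u -> V v -> Rabs (f u v) <= C) ->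
  (forall u v, U u -> V v -> Rabs (g u v) <= C) ->
  (forall u v, U u -> V v -> Rabs ((a + tau * f u v) - (a' + tau * g u v)) <= K) ->
  Rabs (a + tau * inf_sup U V f - a' - tau * inf_sup U V g) <= K.
Proof.
  intros HU HV Ht Hf Hg Hfg.
  assert (H1 : inf_sup U V f <= inf_sup U V g + (K - a + a') / tau).
  { apply (inf_sup_le_shift U V C HU HV); auto. intros u v Hu Hv.
    pose proof (proj1 (Rabs_le_between _ _) (Hfg u v Hu Hv)).
    apply (Rmult_le_reg_l tau); [exact Ht |]. field_simplify; lra. }
  assert (H2 : inf_sup U V g <= inf_sup U V f + (K + a - a') / tau).
  { apply (inf_sup_le_shift U V C HU HV); auto. intros u v Hu Hv.
    pose proof (proj1 (Rabs_le_between _ _) (Hfg u v Hu Hv)).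
    apply (Rmult_le_reg_l tau); [exact Ht |]. field_simplify; lra. }
  apply (Rmult_le_compat_l tau) in H1, H2; try lra.
  replace (tau * (inf_sup U V g + (K - a + a') / tau)) with (tau * inf_sup U V g + (K - a + a')) in H1
    by (field; lra).
  replace (tau * (inf_sup U V f + (K + a - a') / tau)) with (tau * inf_sup U V f + (K + a - a')) in H2
    by (field; lra).
  apply Rabs_le_between. lra.
Qed.

(** * One Euler step with a frozen control *)

Lemma Rabs_mul_le_young a r s M eta : 0 <= M -> 0 < eta -> Rabs a <= M * s ->
  Rabs (a * r) <= M / 2 * (s ^ 2 / eta + eta * r ^ 2).
Proof.
  intros HM He Ha. rewrite Rabs_mult.
  assert (Hs : Rabs a <= M * Rabs s) by (pose proof (Rle_abs s); nra).
  assert (Hy : 2 * (Rabs s * Rabs r) <= s ^ 2 / eta + eta * r ^ 2).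
  { apply (Rmult_le_reg_r eta); [exact He |].
    replace ((s ^ 2 / eta + eta * r ^ 2) * eta) with (Rabs s ^ 2 + (eta * Rabs r) ^ 2)
      by (rewrite Rpow_mult_distr, !pow2_abs; field; lra).
    pose proof (pow2_ge_0 (Rabs s - eta * Rabs r)). nra. }
  pose proof (Rabs_pos r). pose proof (Rabs_pos s). nra.
Qed.

Lemma le_of_forall_young X A B delta : 0 <= A -> 0 <= B -> 0 <= delta ->
  (forall eta, 0 < eta -> X <= A * delta ^ 2 / eta + B * eta) -> X <= (A + B) * delta.
Proof.
  intros HA HB Hd H. destruct Hd as [Hd | <-].
  - eapply Rle_trans; [apply (H delta Hd) |]. right. field. lra.
  - rewrite Rmult_0_r. destruct (Rle_or_lt X 0) as [HX | HX]; [exact HX | exfalso].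
    specialize (H (X / (B + 1)) ltac:(apply Rdiv_lt_0_compat; lra)).
    replace (A * 0 ^ 2 / (X / (B + 1)) + B * (X / (B + 1))) with (X * (B / (B + 1))) in H
      by (field; lra).
    assert (B / (B + 1) < 1) by (apply Rmult_lt_reg_r with (B + 1); [lra | field_simplify; lra]).
    nra.
Qed.

Section FrozenControl.
Variables (d : nat) (tau M : R) (phi : vec -> R) (x x' : vec) (sg sg' si si' : mat)
  (bb bb' : vec) (e e' : R) (w w' : vec).
Hypotheses (Htau : 0 < tau) (HM : 0 <= M)
  (Hphi : forall y y', Rabs (phi y - phi y') <= M * vdist d y y')
  (HE : gauss_int d tau (fun z => phi (vadd x (matvec d sg z))) e)
  (HE' : gauss_int d tau (fun z => phi (vadd x' (matvec d sg' z))) e')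
  (HW : forall i, (i < d)%nat ->
     gauss_int d tau (fun z => phi (vadd x (matvec d sg z)) * matvec d si z i) (w i))
  (HW' : forall i, (i < d)%nat ->
     gauss_int d tau (fun z => phi (vadd x' (matvec d sg' z)) * matvec d si' z i) (w' i)).

Let beta := matvec d (mtr si) bb.
Let beta' := matvec d (mtr si') bb'.

(* Young's inequality with weight η applied to the two products of the coupling argument. *)
Lemma euler_step_diff_le eta : 0 < eta ->
  Rabs ((e + dot d bb w) - (e' + dot d bb' w')) <=
  M / 2 * ((vdist d x x' ^ 2 + tau * mnorm d (msub sg sg') ^ 2) / eta
           + eta * (1 + tau * norm d beta ^ 2) + eta * (tau * mnorm d sg' ^ 2)
           + tau * vdist d beta beta' ^ 2 / eta).
Proof.
  intros He.
  assert (Hmean := gauss_int_lin _ _ _ _ _ _ (-1)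
    (gauss_int_lin _ _ _ _ _ _ (-1) (gauss_int_affine_weight d tau _ si bb e w Htau HE HW)
                                    (gauss_int_affine_weight d tau _ si' bb' e' w' Htau HE' HW'))
    (gauss_int_affine d tau (fun j => phi x' * (beta j - beta' j)) 0 Htau)).
  assert (Hbound := gauss_int_scal _ _ _ _ (M / 2)
    (gauss_int_lin _ _ _ _ _ _ 1
      (gauss_int_lin _ _ _ _ _ _ 1
        (gauss_int_lin _ _ _ _ _ _ eta
          (gauss_int_scal _ _ _ _ (/ eta) (gauss_int_sqr_norm d tau (vsub x x') (msub sg sg') Htau))
          (gauss_int_sqr_dot d tau 1 beta Htau))
        (gauss_int_scal _ _ _ _ eta (gauss_int_sqr_norm d tau (fun _ => 0) sg' Htau)))
      (gauss_int_scal _ _ _ _ (/ eta) (gauss_int_sqr_dot d tau 0 (vsub beta beta') Htau)))).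
  replace ((e + dot d bb w) - (e' + dot d bb' w'))
    with (e + dot d bb w + -1 * (e' + dot d bb' w') + -1 * 0) by ring.
  eapply Rle_trans; [apply (gauss_int_abs_le _ _ _ _ _ _ Htau Hmean Hbound) |].
  - intros z. cbv beta.
    set (P := phi (vadd x (matvec d sg z))). set (P' := phi (vadd x' (matvec d sg' z))).
    set (s1 := norm d (vadd (vsub x x') (matvec d (msub sg sg') z))).
    set (s2 := norm d (vadd (fun _ => 0) (matvec d sg' z))).
    assert (H1 : Rabs (P - P') <= M * s1).
    { eapply Rle_trans; [apply Hphi |]. right. f_equal. apply norm_ext. intros i _.
      unfold vadd, vsub. rewrite matvec_msub. ring. }
    assert (H2 : Rabs (P' - phi x') <= M * s2).
    { eapply Rle_trans; [apply Hphi |]. right. f_equal. apply norm_ext. intros i _.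
      unfold vadd. ring. }
    assert (Hlin : dot d (fun j => phi x' * (beta j - beta' j)) z = phi x' * (dot d beta z - dot d beta' z)
                   /\ dot d (vsub beta beta') z = dot d beta z - dot d beta' z).
    { unfold dot, vsub. rewrite <- sumn_sub, <- sumn_scal. split; apply sumn_ext; intros; ring. }
    destruct Hlin as [-> ->]. fold beta beta'.
    replace (P * (1 + dot d beta z) + -1 * (P' * (1 + dot d beta' z))
             + -1 * (0 + phi x' * (dot d beta z - dot d beta' z)))
      with ((P - P') * (1 + dot d beta z) + (P' - phi x') * (dot d beta z - dot d beta' z)) by ring.
    eapply Rle_trans; [apply Rabs_triang |].
    eapply Rle_trans; [apply Rplus_le_compat;
      [apply (Rabs_mul_le_young _ _ _ _ _ HM He H1)
      | apply (Rabs_mul_le_young _ _ _ _ _ HM (Rinv_0_lt_compat _ He) H2)] |].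
    right. field. lra.
  - assert (H0 : norm d (fun _ => 0) = 0).
    { unfold norm, dot. rewrite (sumn_ext d _ (fun _ => 0)), sumn_zero by (intros; ring).
      apply sqrt_0. }
    rewrite H0. right. unfold vdist. fold (vsub x x') (vsub beta beta'). field. lra.
Qed.

Definition euler_const (Cb Cs Ci Lb Ls Li : R) : R :=
  (Ls ^ 2 + (Lb * Ci + Cb * Li) ^ 2 + (Cb * Ci) ^ 2 + Cs ^ 2) / 2.

Lemma euler_step_lipschitz Cb Cs Ci Lb Ls Li :
  norm d bb <= Cb -> norm d bb' <= Cb -> mnorm d si <= Ci -> mnorm d sg' <= Cs ->
  mnorm d (msub sg sg') <= Ls * vdist d x x' -> vdist d bb bb' <= Lb * vdist d x x' ->
  mnorm d (msub si si') <= Li * vdist d x x' ->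
  Rabs ((e + dot d bb w) - (e' + dot d bb' w'))
    <= M * (1 + tau * euler_const Cb Cs Ci Lb Ls Li) * vdist d x x'.
Proof.
  intros Hb Hb' Hsi Hsg' Hsg_lip Hb_lip Hsi_lip. set (delta := vdist d x x').
  assert (Hd : 0 <= delta) by apply norm_nonneg.
  pose proof (norm_nonneg d bb). pose proof (norm_nonneg d bb'). pose proof (norm_nonneg d (vsub bb bb')).
  pose proof (mnorm_nonneg d si). pose proof (mnorm_nonneg d sg'). pose proof (mnorm_nonneg d (msub si si')).
  pose proof (mnorm_nonneg d (msub sg sg')).
  assert (Hbeta : norm d beta <= Ci * Cb).
  { eapply Rle_trans; [apply norm_matvec_le |]. rewrite mnorm_mtr. apply Rmult_le_compat; auto. }
  assert (Hdbeta : vdist d beta beta' <= (Lb * Ci + Cb * Li) * delta).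
  { unfold vdist. rewrite (norm_ext d _ (vadd (matvec d (mtr si) (vsub bb bb'))
                                             (matvec d (msub (mtr si) (mtr si')) bb'))).
    - eapply Rle_trans; [apply norm_triang |].
      eapply Rle_trans; [apply Rplus_le_compat; apply norm_matvec_le |].
      change (msub (mtr si) (mtr si')) with (mtr (msub si si')). rewrite !mnorm_mtr.
      assert (mnorm d si * vdist d bb bb' <= Ci * (Lb * delta)) by (apply Rmult_le_compat; auto).
      assert (mnorm d (msub si si') * norm d bb' <= Li * delta * Cb) by (apply Rmult_le_compat; auto).
      change (norm d (vsub bb bb')) with (vdist d bb bb'). lra.
    - intros i _. unfold vadd, beta, beta'. rewrite matvec_vsub, matvec_msub. ring. }
  set (K := Lb * Ci + Cb * Li).
  set (A := 1 + tau * (Ls ^ 2 + K ^ 2)). set (B := 1 + tau * ((Cb * Ci) ^ 2 + Cs ^ 2)).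
  assert (HA : 0 <= A) by (unfold A; pose proof (pow2_ge_0 Ls); pose proof (pow2_ge_0 K); nra).
  assert (HB : 0 <= B) by (unfold B; pose proof (pow2_ge_0 (Cb * Ci)); pose proof (pow2_ge_0 Cs); nra).
  replace (M * (1 + tau * euler_const Cb Cs Ci Lb Ls Li) * delta)
    with ((M / 2 * A + M / 2 * B) * delta) by (unfold A, B, K, euler_const; field).
  apply le_of_forall_young; [nra | nra | exact Hd |]. intros eta He.
  eapply Rle_trans; [apply (euler_step_diff_le eta He) |].
  assert (Hsq : forall a b, 0 <= a -> a <= b -> a ^ 2 <= b ^ 2) by (intros; nra).
  assert (S1 : mnorm d (msub sg sg') ^ 2 <= Ls ^ 2 * delta ^ 2)
    by (rewrite <- Rpow_mult_distr; apply Hsq; auto).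
  assert (S2 : norm d beta ^ 2 <= (Cb * Ci) ^ 2)
    by (rewrite (Rmult_comm Cb); apply Hsq; auto; apply norm_nonneg).
  assert (S3 : mnorm d sg' ^ 2 <= Cs ^ 2) by (apply Hsq; auto).
  assert (S4 : vdist d beta beta' ^ 2 <= K ^ 2 * delta ^ 2)
    by (rewrite <- Rpow_mult_distr; apply Hsq; auto; apply norm_nonneg).
  assert (Hinv : (delta ^ 2 + tau * mnorm d (msub sg sg') ^ 2) / eta + tau * vdist d beta beta' ^ 2 / eta
                 <= A * delta ^ 2 / eta).
  { unfold Rdiv. rewrite <- Rmult_plus_distr_r. apply Rmult_le_compat_r; [left; apply Rinv_0_lt_compat; lra |].
    unfold A. nra. }
  assert (Hlin : eta * (1 + tau * norm d beta ^ 2) + eta * (tau * mnorm d sg' ^ 2) <= B * eta).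
  { assert (0 <= eta * tau) by nra. unfold B. nra. }
  replace (M / 2 * A * delta ^ 2 / eta + M / 2 * B * eta) with (M / 2 * (A * delta ^ 2 / eta + B * eta))
    by (field; lra).
  apply Rmult_le_compat_l; [lra |]. fold delta. lra.
Qed.

End FrozenControl.

(* Compare the origin with the first unit vector; this is where d >= 1 is needed. *)
Lemma lipschitz_const_nonneg d (phi : vec -> R) M : (1 <= d)%nat ->
  (forall y y', Rabs (phi y - phi y') <= M * vdist d y y') -> 0 <= M.
Proof.
  intros Hd H.
  set (y := fun _ : nat => 0). set (y' := fun i : nat => if Nat.eqb i 0 then 1 else 0).
  assert (H1 : 1 <= vdist d y y').
  { replace 1 with (Rabs (y 0%nat - y' 0%nat)) 
      by (cbv [y y' Nat.eqb]; rewrite Rminus_0_l, Rabs_Ropp, Rabs_R1; reflexivity).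
    apply (coord_le_norm d (fun i => y i - y' i)). lia. }
  specialize (H y y'). pose proof (Rabs_pos (phi y - phi y')). nra.
Qed.

Lemma grid_time_inT T L k : 0 < T -> (k < L)%nat -> inT T (INR k * (T / INR L)).
Proof.
  intros HT HkL. assert (HL : 0 < INR L) by (apply lt_0_INR; lia).
  assert (Hk : INR k < INR L) by (apply lt_INR; lia). pose proof (pos_INR k).
  replace (INR k * (T / INR L)) with (T * (INR k / INR L)) by (field; lra).
  split; [apply Rmult_le_pos; [lra | apply Rdiv_le_0_compat; lra] |].
  rewrite <- (Rmult_1_r T) at 2. apply Rmult_le_compat_l; [lra |].
  apply (Rmult_le_reg_r (INR L)); [exact HL |].
  replace (INR k / INR L * INR L) with (INR k) by (field; lra). lra.
Qed.

Lemma hamiltonian_payoff_abs_le d I (bv xi p : vec) (lv : nat -> R) Cb Cl :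
  norm d bv <= Cb -> simplex I p -> (forall i, (i < I)%nat -> Rabs (lv i) <= Cl) ->
  Rabs (dot d bv xi + sumn I (fun i => p i * lv i)) <= Cb * norm d xi + Rabs Cl.
Proof.
  intros Hb Hp Hl. eapply Rle_trans; [apply Rabs_triang |]. apply Rplus_le_compat.
  - eapply Rle_trans; [apply dot_le_norm |].
    apply Rmult_le_compat_r; [apply norm_nonneg | exact Hb].
  - apply sumn_simplex_abs_le; auto. intros i Hi. eapply Rle_trans; [apply Hl; auto | apply Rle_abs].
Qed.

Lemma euler_const_nonneg Cb Cs Ci Lb Ls Li : 0 <= euler_const Cb Cs Ci Lb Ls Li.
Proof.
  unfold euler_const. pose proof (pow2_ge_0 Ls). pose proof (pow2_ge_0 Cs).
  pose proof (pow2_ge_0 (Lb * Ci + Cb * Li)). pose proof (pow2_ge_0 (Cb * Ci)). lra.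
Qed.

Lemma frozen_payoff_lipschitz d I tau M c1 Ll delta (p bv bv' w w' : vec) (lv lv' : nat -> R) e e' :
  0 < tau -> 0 <= M -> 0 <= c1 -> 0 <= delta -> simplex I p ->
  Rabs ((e + dot d bv w) - (e' + dot d bv' w')) <= M * (1 + tau * c1) * delta ->
  (forall i, (i < I)%nat -> Rabs (lv i - lv' i) <= Rabs Ll * delta) ->
  Rabs ((e + tau * (dot d bv (fun i => w i / tau) + sumn I (fun i => p i * lv i)))
        - (e' + tau * (dot d bv' (fun i => w' i / tau) + sumn I (fun i => p i * lv' i))))
    <= (M * (1 + (c1 + Rabs Ll) * tau) + (c1 + Rabs Ll) * tau) * delta.
Proof.
  intros Htau HM Hc1 Hd Hp Hstep Hcost.
  assert (Hdot : forall bv wv, tau * dot d bv (fun i => wv i / tau) = dot d bv wv).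
  { intros. unfold dot. rewrite <- sumn_scal. apply sumn_ext. intros; field; lra. }
  assert (Hsum : Rabs (sumn I (fun i => p i * lv i) - sumn I (fun i => p i * lv' i)) <= Rabs Ll * delta).
  { rewrite <- sumn_sub. rewrite (sumn_ext I _ (fun i => p i * (lv i - lv' i))) by (intros; ring).
    now apply sumn_simplex_abs_le. }
  rewrite !Rmult_plus_distr_l, !Hdot.
  set (S := sumn I (fun i => p i * lv i)). set (S' := sumn I (fun i => p i * lv' i)). fold S S' in Hsum.
  replace (e + (dot d bv w + tau * S) - (e' + (dot d bv' w' + tau * S')))
    with ((e + dot d bv w - (e' + dot d bv' w')) + tau * (S - S')) by ring.
  eapply Rle_trans; [apply Rabs_triang |]. rewrite Rabs_mult, (Rabs_pos_eq tau) by lra.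
  assert (tau * Rabs (S - S') <= tau * (Rabs Ll * delta)) by (apply Rmult_le_compat_l; lra).
  assert (0 <= M * tau * Rabs Ll * delta)
    by (pose proof (Rabs_pos Ll); apply Rmult_le_pos; [apply Rmult_le_pos; [apply Rmult_le_pos |] |]; lra).
  assert (0 <= c1 * tau * delta) by (apply Rmult_le_pos; [apply Rmult_le_pos |]; lra).
  nra.
Qed.

Theorem lemma3p3 (T : R) (d I : nat) (Cb Lb Cs Ls Ci Li Cl Ll Cg Lg : R) :
  0 < T -> (1 <= d)%nat -> (1 <= I)%nat ->
  exists c : R,
  forall (mU mV : nat) (U V : vec -> Prop)
    (b : R -> vec -> vec -> vec -> vec) (sigma sinv : R -> vec -> mat)
    (l : nat -> R -> vec -> vec -> vec -> R) (g : nat -> vec -> R),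
  assumptionA T d I mU mV U V b sigma sinv l g Cb Lb Cs Ls Ci Li Cl Ll Cg Lg ->
  forall (L k : nat) (phi : vec -> R) (M : R),
  (k < L)%nat ->
  (forall y y', Rabs (phi y - phi y') <= M * vdist d y y') ->
  let tau := T / INR L in
  let tk := INR k * tau in
  forall (x x' p : vec), simplex I p ->
  forall (e e' : R) (w w' : vec),
  gauss_int d tau (fun z => phi (vadd x (matvec d (sigma tk x) z))) e ->
  gauss_int d tau (fun z => phi (vadd x' (matvec d (sigma tk x') z))) e' ->
  (forall i, (i < d)%nat ->
     gauss_int d tau (fun z => phi (vadd x (matvec d (sigma tk x) z)) *
                               matvec d (sinv tk x) z i) (w i)) ->
  (forall i, (i < d)%nat ->
     gauss_int d tau (fun z => phi (vadd x' (matvec d (sigma tk x') z)) *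
                               matvec d (sinv tk x') z i) (w' i)) ->
  Rabs (e + tau * Hinfsup d I U V b l tk x (fun i => w i / tau) p
        - e' - tau * Hinfsup d I U V b l tk x' (fun i => w' i / tau) p)
  <= (M * (1 + c * tau) + c * tau) * vdist d x x'.
Proof.
  intros HT Hd HI. set (c1 := euler_const Cb Cs Ci Lb Ls Li).
  exists (c1 + Rabs Ll).
  intros mU mV U V b sigma sinv l g HA L k phi M HkL Hphi tau tk x x' p Hp e e' w w' HE HE' HW HW'.
  destruct HA as (_ & _ & HU & HV & Hb_bd & _ & Hb_lip & Hs_bd & Hs_lip & _ & Hi_bd & Hi_lip & Hl_bd & _ & Hl_lip & _).
  assert (Htau : 0 < tau) by (apply Rdiv_lt_0_compat; [lra | apply lt_0_INR; lia]).
  assert (Htk : inT T tk) by (apply grid_time_inT; auto).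
  clearbody tk tau.
  assert (HM := lipschitz_const_nonneg d phi M Hd Hphi).
  assert (Hfrozen : forall K, K * (Rabs (tk - tk) + vdist d x x') = K * vdist d x x')
    by (intros; rewrite Rminus_diag, Rabs_R0; ring).
  assert (HCb : 0 <= Cb).
  { destruct HU as [u Hu], HV as [v Hv].
    exact (Rle_trans _ _ _ (norm_nonneg _ _) (Hb_bd tk x u v Htk Hu Hv)). }
  set (xi := fun i => w i / tau). set (xi' := fun i => w' i / tau).
  pose proof (norm_nonneg d xi). pose proof (norm_nonneg d xi').
  apply (inf_sup_Rabs_le U V (Cb * (norm d xi + norm d xi') + Rabs Cl)); auto.
  1,2: intros u v Hu Hv; eapply Rle_trans; [apply hamiltonian_payoff_abs_le; eauto | nra].
  intros u v Hu Hv.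
  assert (Hc1 : 0 <= c1) by apply euler_const_nonneg.
  assert (Hdelta : 0 <= vdist d x x') by apply norm_nonneg.
  apply frozen_payoff_lipschitz; auto.
  - apply (euler_step_lipschitz d tau M phi x x' (sigma tk x) (sigma tk x') (sinv tk x) (sinv tk x'));
      auto; rewrite <- Hfrozen; unfold msub; auto.
  - intros i Hi. rewrite <- Hfrozen. eapply Rle_trans; [apply Hl_lip; auto |].
    apply Rmult_le_compat_r; [| apply Rle_abs].
    rewrite Rminus_diag, Rabs_R0, Rplus_0_l. apply norm_nonneg.
Qed.
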